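(* Let $n,k\ge0$ be integers, $R\subseteq[0,k]$ and $R^c=[0,k]\setminus R$. Define $$\binom{n}{k,R}=\#\bigl\{\{s_1<s_2<\dots<s_k\}\subseteq[n] : s_{i+1}=s_i+1\text{ for all } i\in R\bigr\},$$ with the conventions $s_0=0$ and $s_{k+1}=n+1$. Then $$\binom{n}{k,R}=\sum_{\ell\ge0}(-1)^{\ell-k}\binom{\ell}{k,R^c}\binom{n}{\ell},$$ where $\binom{n}{\ell}$ is the ordinary binomial coefficient.
   Context: $[n]=\{1,\dots,n\}$ and $[0,k]=\{0,1,\dots,k\}$. *)

From HB Require Import structures.
From mathcomp Require Import all_boot all_order all_algebra.
Set Implicit Arguments. Unset Strict Implicit. Unset Printing Implicit Defensive.

(* For A ⊆ [n] (encoded as A : {set 'I_n}, element x representing x+1),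
   the extended sorted sequence s_0 = 0, s_1 < ... < s_k (elements of A), s_{k+1} = n+1. *)
Definition ext_seq (n : nat) (A : {set 'I_n}) : seq nat :=
  0 :: rcons (sort leq [seq (val x).+1 | x in A]) n.+1.

Definition binom_R (n k : nat) (R : {set 'I_k.+1}) : nat :=
  #|[set A : {set 'I_n} | (#|A| == k) &&
     [forall i : 'I_k.+1, (i \in R) ==>
        (nth 0 (ext_seq A) (val i).+1 == (nth 0 (ext_seq A) (val i)).+1)]]|.
Arguments binom_R n k R : clear implicits.

From mathcomp Require Import all_boot all_order all_algebra.
Import GRing.Theory.

(* Both sides satisfy the recurrence
     b(n+1, k, R) = [k \notin R] b(n, k, R) + b(n, k-1, R \cap [0, k-1]),
     b(0, k, R) = [k = 0].
   For the left-hand side, split the subsets of [n+1] according to whether they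
   contain n+1: if not, s_{k+1} = n+2 can only follow s_k when k \notin R; if so,
   s_k = n+1 and the constraint at k holds automatically.  For the right-hand
   side, Pascal's rule turns the binomial transform at n+1 into the transform at
   n plus the transform of the shifted coefficients, and the recurrence for
   b(l+1, k, R^c), together with the sign flip (-1)^(l+1-k) = -(-1)^(l-k),
   produces the same recurrence. *)

Section ExtSeq.
Context {n : nat}.

Definition elems (A : {set 'I_n}) : seq nat := [seq (val x).+1 | x in A].

Lemma sorted_elems (A : {set 'I_n}) : sorted leq (elems A).
Proof.
have sub_iota : subseq [seq val x | x in A] (iota 0 n).
  by rewrite -val_enum_ord map_subseq // enumT /enum_mem filter_subseq.
rewrite /elems /image_mem (map_comp succn val) sorted_map.
exact (subseq_sorted leq_trans sub_iota (iota_sorted 0 n)).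
Qed.

Lemma ext_seqE (A : {set 'I_n}) : ext_seq A = 0 :: rcons (elems A) n.+1.
Proof. by rewrite /ext_seq sorted_sort ?sorted_elems //; exact: leq_trans. Qed.

Lemma size_elems (A : {set 'I_n}) : size (elems A) = #|A|.
Proof. by rewrite size_map -cardE. Qed.

Lemma elems_le (A : {set 'I_n}) : all (leq^~ n) (elems A).
Proof. by apply/allP => _ /mapP[x _ ->]; exact: ltn_ord. Qed.

Lemma last_elems_le (B : {set 'I_n}) : last 0 (elems B) <= n.
Proof.
have /allP le_n : all (leq^~ n) (0 :: elems B) by rewrite /= elems_le.
by apply: le_n; exact: mem_last.
Qed.

End ExtSeq.

Section WidenSet.
Context {n : nat}.

Local Notation widen := (widen_ord (leqnSn n)).

Definition widen_set (B : {set 'I_n}) : {set 'I_n.+1} := widen @: B.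
Definition shrink_set (A : {set 'I_n.+1}) : {set 'I_n} := [set i | widen i \in A].

Lemma widen_inj : injective widen.
Proof. by move=> x y /(congr1 val) /= /val_inj. Qed.

Lemma widen_neq_max x : (widen x == ord_max) = false.
Proof. by apply/negbTE; rewrite -val_eqE /= neq_ltn ltn_ord. Qed.

Lemma mem_widen_set B x : (widen x \in widen_set B) = (x \in B).
Proof. exact: mem_imset widen_inj. Qed.

Lemma max_notin_widen_set B : ord_max \notin widen_set B.
Proof. by apply/imsetP => -[x _ /eqP]; rewrite eq_sym widen_neq_max. Qed.

Lemma shrink_widen_set B : shrink_set (widen_set B) = B.
Proof. by apply/setP => x; rewrite inE mem_widen_set. Qed.

Lemma shrink_setU1_max B : shrink_set (ord_max |: B) = shrink_set B.
Proof. by apply/setP => x; rewrite !inE widen_neq_max. Qed.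

Lemma shrink_setC A : shrink_set (~: A) = ~: shrink_set A.
Proof. by apply/setP => x; rewrite !inE. Qed.

Lemma ord_maxVwiden (x : 'I_n.+1) : x = ord_max \/ exists y, x = widen y.
Proof.
case: (ltnP x n) => [lt_xn | le_nx].
  by right; exists (Ordinal lt_xn); apply: val_inj.
by left; apply: val_inj; apply/eqP; rewrite /= eqn_leq le_nx -ltnS ltn_ord.
Qed.

Lemma forall_ordS (Q : pred 'I_n.+1) :
  [forall i, Q i] = [forall i, Q (widen i)] && Q ord_max.
Proof.
apply/forallP/andP => [Q_all | [/forallP Q_widen Q_max] x].
  by split; [apply/forallP => i |]; exact: Q_all.
by case: (ord_maxVwiden x) => [->|[y ->]].
Qed.

Lemma widen_shrink_set A :
  widen_set (shrink_set A) = if ord_max \in A then A :\ ord_max else A.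
Proof.
apply/setP => x; case: (ord_maxVwiden x) => [->|[y ->]].
  by rewrite (negbTE (max_notin_widen_set _)); case: ifP => //; rewrite !inE eqxx.
by rewrite mem_widen_set inE; case: ifP; rewrite // !inE widen_neq_max.
Qed.

Lemma elems_ordS (A : {set 'I_n.+1}) :
  elems A = elems (shrink_set A) ++ (if ord_max \in A then [:: n.+1] else [::]).
Proof.
have shrinkE : [seq i <- enum 'I_n | preim widen (mem A) i] = enum (shrink_set A).
  by rewrite enumT /enum_mem; apply: eq_filter => i; rewrite [RHS]inE.
rewrite /elems /image_mem {1}/enum_mem -enumT enum_ordSr filter_rcons filter_map.
rewrite shrinkE -[ord_max \in A]/(mem A ord_max).
by case: ifP; rewrite ?map_rcons ?cats1 ?cats0 -map_comp.
Qed.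

Lemma card_widen_set (B : {set 'I_n}) : #|widen_set B| = #|B|.
Proof. exact/card_imset/widen_inj. Qed.

Lemma card_setU1_max (B : {set 'I_n}) : #|ord_max |: widen_set B| = #|B|.+1.
Proof. by rewrite cardsU1 max_notin_widen_set card_widen_set. Qed.

Lemma elems_widen_set B : elems (widen_set B) = elems B.
Proof.
by rewrite elems_ordS shrink_widen_set (negbTE (max_notin_widen_set B)) cats0.
Qed.

Lemma elems_setU1_max B : elems (ord_max |: widen_set B) = rcons (elems B) n.+1.
Proof.
by rewrite elems_ordS shrink_setU1_max shrink_widen_set setU11 cats1.
Qed.

Lemma card_set_ordS (P : pred {set 'I_n.+1}) :
  #|[set A | P A]| =
  #|[set B | P (widen_set B)]| + #|[set B | P (ord_max |: widen_set B)]|.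
Proof.
have inj_w : injective widen_set := can_inj shrink_widen_set.
have inj_wm : injective (fun B => ord_max |: widen_set B).
  by move=> B C /(congr1 shrink_set); rewrite !shrink_setU1_max !shrink_widen_set.
rewrite -(cardsID [set A : {set _} | ord_max \in A]) addnC -(card_imset _ inj_w).
rewrite -(card_imset _ inj_wm); congr addn; apply: eq_card => A; rewrite !inE.
- apply/andP/imsetP => [[notinA PA] | [B]]; last first.
    by rewrite inE => PB ->; rewrite max_notin_widen_set.
  by exists (shrink_set A); rewrite ?inE widen_shrink_set (negbTE notinA).
- apply/andP/imsetP => [[PA inA] | [B]]; last first.
    by rewrite inE => PB ->; rewrite setU11.
  by exists (shrink_set A); rewrite ?inE widen_shrink_set inA setD1K.
Qed.

End WidenSet.

Definition consecutive_at m (R : {set 'I_m}) (s : seq nat) : bool :=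
  [forall i : 'I_m, (i \in R) ==> (nth 0 s i.+1 == (nth 0 s i).+1)].
Arguments consecutive_at {m} R s.

Lemma binom_RE n k R :
  binom_R n k R = #|[set A : {set 'I_n} | (#|A| == k) && consecutive_at R (ext_seq A)]|.
Proof. by []. Qed.

Lemma consecutive_at_rcons m (R : {set 'I_m.+1}) s x : size s = m.+1 ->
  consecutive_at R (rcons s x) =
  consecutive_at (shrink_set R) s && ((ord_max \in R) ==> (x == (last 0 s).+1)).
Proof.
move=> size_s; rewrite /consecutive_at forall_ordS; congr andb.
  apply: eq_forallb => i /=; rewrite inE !nth_rcons size_s ltnS ltn_ord.
  by rewrite ltnS ltnW.
by rewrite /= !nth_rcons size_s ltnn eqxx ltnSn -nth_last size_s.
Qed.

Section ConsecutiveAt.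
Context {n : nat}.

Lemma consecutive_at_widen_set k (R : {set 'I_k.+1}) (B : {set 'I_n}) : #|B| = k ->
  consecutive_at R (ext_seq (widen_set B)) =
  (ord_max \notin R) && consecutive_at R (ext_seq B).
Proof.
move=> card_B; rewrite !ext_seqE elems_widen_set -!rcons_cons.
rewrite !consecutive_at_rcons /= ?size_elems ?card_B //.
have /ltn_eqF last_neq : last 0 (elems B) < n.+1 by rewrite ltnS last_elems_le.
by case: (ord_max \in R); rewrite /= ?andbT // eqSS eq_sym last_neq andbF.
Qed.

Lemma consecutive_at_setU1_max k (R : {set 'I_k.+2}) (B : {set 'I_n}) : #|B| = k ->
  consecutive_at R (ext_seq (ord_max |: widen_set B)) =
  consecutive_at (shrink_set R) (ext_seq B).
Proof.
move=> card_B; rewrite !ext_seqE elems_setU1_max -rcons_cons consecutive_at_rcons.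
  by rewrite /= last_rcons eqxx implybT andbT.
by rewrite /= size_rcons size_elems card_B.
Qed.

End ConsecutiveAt.

Lemma card_set_andl (T : finType) (b : bool) (P : pred T) :
  #|[set x | b && P x]| = b * #|[set x | P x]|.
Proof.
by case: b; rewrite ?mul1n // mul0n -(cards0 T); apply: eq_card => x; rewrite !inE.
Qed.

Lemma binom_R0 k (R : {set 'I_k.+1}) : binom_R 0 k R = (k == 0).
Proof.
have set_I0 (A : {set 'I_0}) : A = set0 by apply/setP => -[].
rewrite binom_RE; case: k R => [|k] R; last first.
  apply/eqP; rewrite cards_eq0; apply/eqP/setP => A.
  by rewrite !inE (set_I0 A) cards0.
have elems0 : elems (set0 : {set 'I_0}) = [::].
  by apply/size0nil; rewrite size_elems cards0.
apply: etrans (cards1 (set0 : {set 'I_0})); apply: eq_card => A.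
rewrite !inE (set_I0 A) eqxx cards0 ext_seqE elems0 /=.
by apply/forallP => i; rewrite (ord1 i) implybT.
Qed.

Lemma binom_R_split n k (R : {set 'I_k.+1}) :
  binom_R n.+1 k R = (ord_max \notin R) * binom_R n k R +
    #|[set B : {set 'I_n} | (#|B|.+1 == k) &&
        consecutive_at R (ext_seq (ord_max |: widen_set B))]|.
Proof.
rewrite binom_RE card_set_ordS binom_RE -card_set_andl.
congr addn; apply: eq_card => B.
  rewrite !inE card_widen_set; case: eqP => [card_B|_]; last by rewrite andbF.
  by rewrite consecutive_at_widen_set.
by rewrite !inE card_setU1_max.
Qed.

Lemma binom_R_S0 n (R : {set 'I_1}) :
  binom_R n.+1 0 R = (ord_max \notin R) * binom_R n 0 R.
Proof.
rewrite binom_R_split (_ : #|_| = 0) ?addn0 //.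
by apply/eqP; rewrite cards_eq0; apply/eqP/setP => B; rewrite !inE.
Qed.

Lemma binom_R_SS n k (R : {set 'I_k.+2}) :
  binom_R n.+1 k.+1 R =
  (ord_max \notin R) * binom_R n k.+1 R + binom_R n k (shrink_set R).
Proof.
rewrite binom_R_split binom_RE; congr addn; apply: eq_card => B; rewrite !inE eqSS.
by case: eqP => // card_B; rewrite consecutive_at_setU1_max.
Qed.

Local Open Scope ring_scope.

Section BinomialTransform.
Context {S : pzRingType}.
Implicit Types (c d : nat -> S) (a : S).

Definition binomial_transform c (n : nat) : S := \sum_(l < n.+1) c l * 'C(n, l)%:R.

Lemma binomial_transform_widen c n N : (n <= N)%N ->
  binomial_transform c n = \sum_(l < N.+1) c l * 'C(n, l)%:R.
Proof.
move=> le_nN; rewrite /binomial_transform.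
rewrite (big_ord_widen N.+1 (fun l => c l * 'C(n, l)%:R)) // big_mkcond.
by apply: eq_bigr => l _; case: ltnP => // lt_nl; rewrite bin_small ?mulr0.
Qed.

Lemma binomial_transformS c n :
  binomial_transform c n.+1 =
  binomial_transform c n + binomial_transform (fun l => c l.+1) n.
Proof.
rewrite [in RHS](@binomial_transform_widen c n n.+1 (leqnSn n)) /binomial_transform.
rewrite big_ord_recl [in RHS]big_ord_recl !bin0 -addrA -big_split.
by congr (_ + _); apply: eq_bigr => l _; rewrite binS natrD mulrDr.
Qed.

Lemma eq_binomial_transform c d n :
  c =1 d -> binomial_transform c n = binomial_transform d n.
Proof. by move=> eq_cd; apply: eq_bigr => l _; rewrite eq_cd. Qed.

Lemma binomial_transformD c d n :
  binomial_transform (fun l => c l + d l) n =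
  binomial_transform c n + binomial_transform d n.
Proof. by rewrite -big_split; apply: eq_bigr => l _; rewrite mulrDl. Qed.

Lemma binomial_transformMl a c n :
  binomial_transform (fun l => a * c l) n = a * binomial_transform c n.
Proof.
by rewrite /binomial_transform big_distrr; apply: eq_bigr => l _; rewrite /= mulrA.
Qed.

End BinomialTransform.

Lemma sign_succ (l k : nat) : (-1 : int) ^ (l.+1%:Z - k%:Z) = - (-1) ^ (l%:Z - k%:Z).
Proof.
rewrite -(addn1 l) PoszD addrAC [LHS]exprzDr; last exact: unitrN1.
by rewrite expr1z mulrN1.
Qed.

Lemma sign_succ_succ (l k : nat) :
  (-1 : int) ^ (l.+1%:Z - k.+1%:Z) = (-1) ^ (l%:Z - k%:Z).
Proof. by rewrite -(addn1 l) -(addn1 k) !PoszD opprD addrACA subrr addr0. Qed.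

Definition signed_count k (R : {set 'I_k.+1}) (l : nat) : int :=
  (-1) ^ (l%:Z - k%:Z) * (binom_R l k (~: R))%:Z.
Arguments signed_count {k} R l.

Lemma signed_countS0 (R : {set 'I_1}) (l : nat) :
  signed_count R l.+1 = - (ord_max \in R)%:Z * signed_count R l.
Proof. by rewrite /signed_count binom_R_S0 inE negbK PoszM sign_succ !mulNr mulrCA. Qed.

Lemma signed_countSS k (R : {set 'I_k.+2}) l :
  signed_count R l.+1 =
  - (ord_max \in R)%:Z * signed_count R l + signed_count (shrink_set R) l.
Proof.
rewrite /signed_count binom_R_SS inE negbK shrink_setC PoszD PoszM mulrDr.
by rewrite {1}sign_succ sign_succ_succ !mulNr mulrCA.
Qed.

Lemma addr_oppb_mul (b : bool) (x : int) : x + - b%:Z * x = (~~ b)%:Z * x.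
Proof. by case: b; rewrite /= ?mulN1r ?subrr ?mul0r ?mul1r ?oppr0 ?addr0. Qed.

Lemma transform_signed_count0 k (R : {set 'I_k.+1}) :
  binomial_transform (signed_count R) 0 = (k == 0)%:Z.
Proof.
rewrite /binomial_transform big_ord1 /signed_count binom_R0 bin0 mulr1.
by case: k R => [|k] R; rewrite ?mulr0 ?mulr1.
Qed.

Lemma transform_signed_countS0 (R : {set 'I_1}) n :
  binomial_transform (signed_count R) n.+1 =
  (ord_max \notin R)%:Z * binomial_transform (signed_count R) n.
Proof.
rewrite binomial_transformS (eq_binomial_transform _ _ n (signed_countS0 R)).
by rewrite binomial_transformMl addr_oppb_mul.
Qed.

Lemma transform_signed_countSS k (R : {set 'I_k.+2}) n :
  binomial_transform (signed_count R) n.+1 =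
  (ord_max \notin R)%:Z * binomial_transform (signed_count R) n +
  binomial_transform (signed_count (shrink_set R)) n.
Proof.
rewrite binomial_transformS (eq_binomial_transform _ _ n (signed_countSS k R)).
by rewrite binomial_transformD binomial_transformMl addrA addr_oppb_mul.
Qed.

Lemma binom_R_binomial_transform n k (R : {set 'I_k.+1}) :
  (binom_R n k R)%:Z = binomial_transform (signed_count R) n.
Proof.
elim: n k R => [|n IHn] k R; first by rewrite binom_R0 transform_signed_count0.
case: k R => [|k] R.
  by rewrite binom_R_S0 transform_signed_countS0 PoszM IHn.
by rewrite binom_R_SS transform_signed_countSS PoszD PoszM !IHn.
Qed.

Theorem mainTheorem9 (n k : nat) (R : {set 'I_k.+1}) (N : nat) (hN : (n <= N)%N) :
  (binom_R n k R)%:Z =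
  \sum_(l < N.+1) (-1 : int) ^ ((l%:Z) - (k%:Z)) * (binom_R l k (~: R))%:Z * ('C(n, l))%:Z.
Proof.
rewrite binom_R_binomial_transform (binomial_transform_widen _ _ _ hN).
by apply: eq_bigr => l _; rewrite natz.
Qed.
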